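(* Let $q=2^n$, let $B$ be a $k$-subset of $\mathrm{GF}(q)$, and let $E$ be a subset of $\mathrm{GF}(q)$ such that $\hat f_B(\mu)=\hat f_E(\mu^d)$ for all $\mu\in\mathrm{GF}(q)$, where $d$ is an integer with $\gcd(d,q-1)=1$. Let $a,b\in\mathrm{GF}(q)^*$. Then \[\sum_{x,y\in\mathrm{GF}(q)}(-1)^{f_B(x)+f_B(y)+f_B(ax+by)}=q^2-6qk+12k^2-8N_E(a^d,b^d,1).\] In particular, $N_B(a,b,1)=N_E(a^d,b^d,1)$.
   Context: $\mathrm{Tr}$ is the absolute trace $\mathrm{GF}(2^n)\to\mathrm{GF}(2)$. For a subset $S\subseteq\mathrm{GF}(q)$, $f_S$ is its characteristic function as a Boolean function, and $\hat f(\mu)=\sum_{x\in\mathrm{GF}(2^n)}(-1)^{f(x)+\mathrm{Tr}(\mu x)}$ is the Walsh transform. For $S\subseteq\mathrm{GF}(q)$ and $a,b,c\in\mathrm{GF}(q)$, $N_S(a,b,c)$ is the number of triples $(x,y,z)\in S^3$ with $ax+by+cz=0$. *)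

(* GF(q), q = 2^n, is modelled as an arbitrary finite field
   F with #|F| = 2^n (such a field is GF(2^n) up to isomorphism). *)
From HB Require Import structures.
From mathcomp Require Import all_boot all_order all_algebra.
Set Implicit Arguments. Unset Strict Implicit. Unset Printing Implicit Defensive.
Import Order.TTheory GRing.Theory Num.Theory.
Local Open Scope ring_scope.

(* absolute trace GF(2^n) -> GF(2), valued in F (it lies in {0,1}) *)
Definition absTr (F : finFieldType) (n : nat) (x : F) : F :=
  \sum_(i < n) x ^+ (2 ^ i)%N.

Definition chiTr (F : finFieldType) (n : nat) (x : F) : int :=
  if absTr n x == 0 then 1 else -1.

Definition charf (F : finFieldType) (S : {set F}) (x : F) : bool := x \in S.

Definition walsh (F : finFieldType) (n : nat) (f : F -> bool) (mu : F) : int :=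
  \sum_(x : F) (-1) ^+ f x * chiTr n (mu * x).

Definition N3 (F : finFieldType) (S : {set F}) (a b c : F) : nat :=
  #|[set t : F * F * F | [&& t.1.1 \in S, t.1.2 \in S, t.2 \in S &
                           a * t.1.1 + b * t.1.2 + c * t.2 == 0]]|.

From mathcomp Require Import all_boot all_order all_algebra all_field.
From mathcomp Require Import zify ring.
Set Implicit Arguments. Unset Strict Implicit. Unset Printing Implicit Defensive.
Import GRing.Theory.
Local Open Scope ring_scope.

(* Writing (-1)^f = 1 - 2 f and expanding, the double sum becomes a combination
   of #|B|, #|B|^2 and the number of (x, y) in B^2 with ax + by in B, which is
   N_B(a,b,1) in characteristic 2.  For the second claim, orthogonality of the
   additive characters gives q N_S(a,b,c) = sum_mu S^(a mu) S^(b mu) S^(c mu)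
   with S^(nu) = sum_(x in S) (-1)^Tr(nu x); the Walsh hypothesis says
   B^(nu) = E^(nu^d), and mu |-> mu^d permutes GF(q). *)

Lemma sum_affine (F : finFieldType) (V : nmodType) (c e : F) (G : F -> V) :
  c != 0 -> \sum_(x : F) G (c * x + e) = \sum_(x : F) G x.
Proof.
move=> c_neq0; apply/esym/(reindex_inj (h := fun x => c * x + e)).
by move=> x y /addIr /(mulfI c_neq0).
Qed.

Lemma N3E (F : finFieldType) (S : {set F}) (a b c : F) :
  (N3 S a b c)%:Z =
  \sum_(x in S) \sum_(y in S) \sum_(z in S) (a * x + b * y + c * z == 0)%:R.
Proof.
rewrite pair_big_dep pair_big_dep /N3 -sum1_card -natz natr_sum.
rewrite big_mkcond [RHS]big_mkcond /=.
apply: eq_bigr => -[[x y] z] _; rewrite inE /=.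
by do 3 case: (_ \in S) => //=; case: eqP.
Qed.

Lemma N3_1E (F : finFieldType) (S : {set F}) (a b : F) :
  (N3 S a b 1)%:Z = \sum_(x in S) \sum_(y in S) (- (a * x + b * y) \in S)%:R.
Proof.
rewrite N3E; apply: eq_bigr => x _; apply: eq_bigr => y _.
rewrite big_mkcond (bigD1 (- (a * x + b * y))) //= mul1r subrr eqxx big1 ?addr0.
  by case: (_ \in S).
by move=> z /negPf z_neq; rewrite mul1r [_ + z]addrC addr_eq0 z_neq; case: (_ \in S).
Qed.

Section AbsoluteTrace.
Variables (F : finFieldType) (n : nat).
Hypothesis card_F : #|F| = (2 ^ n)%N.

Let pchar2_F : 2%N \in [pchar F] := card_finPcharP card_F isT.

Lemma degree_gt0 : (0 < n)%N.
Proof. by have := finNzRing_gt1 F; rewrite card_F; case: n. Qed.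

Lemma absTrD (x y : F) : absTr n (x + y) = absTr n x + absTr n y.
Proof.
rewrite /absTr -big_split; apply: eq_bigr => i _; apply: exprDn_pchar.
by rewrite pnatX pnatE // pchar2_F.
Qed.

Lemma absTr_sqr (x : F) : absTr n x ^+ 2 = absTr n x.
Proof.
have := degree_gt0; case def_n: n => [//|m] _.
rewrite /absTr -(pFrobenius_autE pchar2_F) rmorph_sum /=.
rewrite big_ord_recr [RHS]big_ord_recl addrC /= expn0 expr1.
rewrite pFrobenius_autE -exprM -expnSr -def_n -card_F expf_card; congr (_ + _).
by apply: eq_bigr => i _; rewrite pFrobenius_autE -exprM -expnSr.
Qed.

Lemma absTr01 (x : F) : (absTr n x == 0) || (absTr n x == 1).
Proof.
have : absTr n x * (absTr n x - 1) == 0 by rewrite mulrBr mulr1 -expr2 absTr_sqr subrr.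
by rewrite mulf_eq0 subr_eq0.
Qed.

Lemma chiTr0 : chiTr n (0 : F) = 1.
Proof. by rewrite /chiTr /absTr big1 ?eqxx // => i _; rewrite expr0n expn_eq0. Qed.

Lemma chiTrD (x y : F) : chiTr n (x + y) = chiTr n x * chiTr n y.
Proof.
rewrite /chiTr absTrD.
have one_add_one : 1 + 1 = 0 :> F by rewrite -mulr2n (pcharf0 pchar2_F).
by case/orP: (absTr01 x) => /eqP->; case/orP: (absTr01 y) => /eqP->;
  rewrite ?addr0 ?add0r ?one_add_one ?eqxx ?oner_eq0.
Qed.

Lemma absTr_neq0 : exists c : F, absTr n c != 0.
Proof.
have := degree_gt0; case def_n: n => [//|m] _.
pose p : {poly F} := 'X^(2 ^ m) + \sum_(i < m) 'X^(2 ^ i).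
have p_absTr x : p.[x] = absTr n x.
  rewrite def_n /absTr big_ord_recr /= addrC hornerD hornerXn horner_sum.
  by congr (_ + _); apply: eq_bigr => i _; rewrite hornerXn.
have size_p : size p = (2 ^ m).+1.
  rewrite size_polyDl size_polyXn // ltnS (leq_trans (size_sum _ _ _)) //.
  by apply/bigmax_leqP => i _; rewrite size_polyXn ltn_exp2l.
apply/existsP; rewrite -negb_forall; apply/forallP => all_zero.
have p_neq0 : p != 0 by rewrite -size_poly_gt0 size_p.
have all_roots : all (root p) (enum F).
  by apply/allP => x _; rewrite /root p_absTr def_n all_zero.
have := max_poly_roots p_neq0 all_roots (enum_uniq _).
rewrite -cardE card_F def_n size_p expnS ltnS; move: (expn_gt0 2 m); lia.
Qed.

Lemma sum_chiTr : \sum_(mu : F) chiTr n mu = 0.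
Proof.
have [c absTr_c] := absTr_neq0.
set S := \sum_mu _.
have : S = - S.
  rewrite {1}/S (reindex_inj (addIr c)) /=.
  under eq_bigr do rewrite chiTrD.
  by rewrite -mulr_suml /chiTr (negPf absTr_c) mulrN1.
lia.
Qed.

Lemma sum_chiTr_mul (t : F) :
  \sum_(mu : F) chiTr n (mu * t) = if t == 0 then #|F|%:Z else 0.
Proof.
have [->|t_neq0] := eqVneq t 0.
  by under eq_bigr do rewrite mulr0 chiTr0; rewrite sumr_const -natz.
rewrite (reindex_inj (mulIf (invr_neq0 t_neq0))) /=.
by under eq_bigr do rewrite mulfVK //; exact: sum_chiTr.
Qed.

Definition charsum (S : {set F}) (nu : F) : int := \sum_(x in S) chiTr n (nu * x).

Lemma walsh_charf (S : {set F}) (nu : F) :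
  walsh n (charf S) nu = (if nu == 0 then #|F|%:Z else 0) - 2 * charsum S nu.
Proof.
rewrite -(sum_chiTr_mul nu) /walsh /charsum mulr_sumr [X in _ - X]big_mkcond -sumrB.
by apply: eq_bigr => x _; rewrite /charf [x * nu]mulrC; case: (x \in S); ring.
Qed.

Lemma sum_walsh (f : F -> bool) : \sum_(mu : F) walsh n f mu = #|F|%:Z * (-1) ^+ f 0.
Proof.
rewrite exchange_big /=; under eq_bigr do rewrite -mulr_sumr sum_chiTr_mul.
rewrite (bigD1 0) //= eqxx big1 ?addr0 1?mulrC // => x /negPf->.
by rewrite mulr0.
Qed.

Lemma N3_charsum (S : {set F}) (a b c : F) :
  #|F|%:Z * (N3 S a b c)%:Z =
  \sum_(mu : F) charsum S (a * mu) * charsum S (b * mu) * charsum S (c * mu).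
Proof.
have expand mu : charsum S (a * mu) * charsum S (b * mu) * charsum S (c * mu) =
    \sum_(x in S) \sum_(y in S) \sum_(z in S) chiTr n (mu * (a * x + b * y + c * z)).
  rewrite /charsum big_distrlr big_distrl; apply: eq_bigr => x _.
  rewrite big_distrl; apply: eq_bigr => y _; rewrite big_distrr; apply: eq_bigr => z _.
  by rewrite /= !mulrDr !chiTrD; congr (_ * _ * _); congr (chiTr _ _); ring.
rewrite (eq_bigr _ (fun mu _ => expand mu)).
rewrite N3E mulr_sumr exchange_big; apply: eq_bigr => x _.
rewrite mulr_sumr exchange_big; apply: eq_bigr => y _.
rewrite mulr_sumr exchange_big; apply: eq_bigr => z _.
by rewrite sum_chiTr_mul; case: (_ == 0); rewrite ?mulr1 ?mulr0.
Qed.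

End AbsoluteTrace.

Section PowerMap.
Variable F : finFieldType.

Lemma expfz_card_pred (x : F) : x != 0 -> x ^ (#|F|%:Z - 1) = 1.
Proof.
move=> x_neq0; have card_gt0 : (0 < #|F|)%N by have := finNzRing_gt1 F; case: #|F|.
rewrite -[#|F|]prednK // -addn1 PoszD addrK -exprnP.
by apply: (mulfI x_neq0); rewrite mulr1 -exprS prednK ?expf_card.
Qed.

Lemma expfz_coprime_inj (d : int) :
  d != 0 -> coprimez d (#|F|%:Z - 1) -> injective (fun x : F => x ^ d).
Proof.
move=> d_neq0 /eqP coprime_d.
have [u [v bezout]] := Bezoutz d (#|F|%:Z - 1); rewrite coprime_d in bezout.
have expzK (x : F) : x != 0 -> (x ^ d) ^ u = x.
  move=> x_neq0; rewrite exprz_exp [d * u]mulrC -[x in RHS]expr1z -bezout.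
  by rewrite expfzDr // [v * _]mulrC -(exprz_exp x _ v) expfz_card_pred // exp1rz mulr1.
have exp_eq0 (z : F) : (z ^ d == 0) = (z == 0) by rewrite expfz_eq0 d_neq0.
move=> x y /=; have [->|x_neq0] := eqVneq x 0 => eq_xy.
  by apply/eqP; rewrite eq_sym -exp_eq0 -eq_xy exp_eq0.
have y_neq0 : y != 0 by rewrite -exp_eq0 -eq_xy exp_eq0.
by rewrite -(expzK x) // eq_xy expzK.
Qed.

End PowerMap.

Section WalshTransfer.
Variables (F : finFieldType) (n : nat) (B E : {set F}) (d : int).
Hypotheses (card_F : #|F| = (2 ^ n)%N)
  (walsh_BE : forall mu : F, walsh n (charf B) mu = walsh n (charf E) (mu ^ d)).

(* For q = 2 the exponent d = 0 is coprime to q - 1, so it has to be excluded by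
   parity: summed over mu, the left-hand Walsh transforms give +-q, the right-hand
   ones an even multiple of q. *)
Lemma walsh_exponent_neq0 : d != 0.
Proof.
apply/eqP => d0.
have q_neq0 : #|F|%:Z != 0 by have := finNzRing_gt1 F; lia.
have : \sum_(mu : F) walsh n (charf B) mu = #|F|%:Z * walsh n (charf E) 1.
  rewrite (eq_bigr (fun=> walsh n (charf E) 1)) => [|mu _]; last first.
    by rewrite walsh_BE d0 expr0z.
  by rewrite sumr_const -mulr_natl natz.
rewrite sum_walsh // walsh_charf // oner_eq0 => /(mulfI q_neq0).
by case: (charf B 0); rewrite ?expr1 ?expr0; lia.
Qed.

Lemma charsum_expz (nu : F) : charsum n B nu = charsum n E (nu ^ d).
Proof.
have := walsh_BE nu; rewrite !walsh_charf // expfz_eq0 walsh_exponent_neq0 /=.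
by case: (nu == 0); lia.
Qed.

Lemma N3_expz (a b : F) : coprimez d (#|F|%:Z - 1) ->
  N3 B a b 1 = N3 E (a ^ d) (b ^ d) 1.
Proof.
move=> coprime_d; have q_neq0 : #|F|%:Z != 0 by have := finNzRing_gt1 F; lia.
apply/eqP; rewrite -eqz_nat -(inj_eq (mulfI q_neq0)) !(N3_charsum card_F); apply/eqP.
rewrite [RHS](reindex_inj (expfz_coprime_inj walsh_exponent_neq0 coprime_d)) /=.
by apply: eq_bigr => mu _; rewrite !charsum_expz !expfzMl exp1rz.
Qed.

End WalshTransfer.

Section CubeExpansion.
Variables (F : finFieldType) (B : {set F}) (a b : F).
Hypotheses (F_pchar2 : 2%N \in [pchar F]) (a_neq0 : a != 0) (b_neq0 : b != 0).

Let ind (x : F) : int := (x \in B)%:R.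

Lemma sum_ind : \sum_(x : F) ind x = #|B|%:Z.
Proof.
rewrite -sum1_card -natz natr_sum [RHS]big_mkcond /=.
by apply: eq_bigr => x _; rewrite /ind; case: (x \in B).
Qed.

Lemma sum2_affine_mul_l (G H : F -> int) :
  \sum_(x : F) \sum_(y : F) G x * H (a * x + b * y) = (\sum_x G x) * \sum_x H x.
Proof.
rewrite mulr_suml; apply: eq_bigr => x _.
rewrite -mulr_sumr (eq_bigr (fun y => H (b * y + a * x))) => [|y _]; last by rewrite addrC.
by rewrite sum_affine.
Qed.

Lemma sum2_affine_mul_r (G H : F -> int) :
  \sum_(x : F) \sum_(y : F) G y * H (a * x + b * y) = (\sum_x G x) * \sum_x H x.
Proof.
rewrite exchange_big mulr_suml; apply: eq_bigr => y _.
by rewrite -mulr_sumr sum_affine.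
Qed.

Lemma sum_ind_affine (x : F) : \sum_(y : F) ind (a * x + b * y) = #|B|%:Z.
Proof. by under eq_bigr do rewrite addrC; rewrite sum_affine // sum_ind. Qed.

Lemma sum2_ind_e1 :
  \sum_(x : F) \sum_(y : F) (ind x + ind y + ind (a * x + b * y)) = 3 * (#|F| * #|B|)%:Z.
Proof.
under eq_bigr => x _ do rewrite !big_split /= sumr_const sum_ind sum_ind_affine.
rewrite !big_split /= sumrMnl sum_ind !sumr_const !cardE; lia.
Qed.

Lemma sum2_ind_e2 :
  \sum_(x : F) \sum_(y : F) (ind x * ind y + ind x * ind (a * x + b * y)
                             + ind y * ind (a * x + b * y)) = 3 * (#|B| ^ 2)%:Z.
Proof.
under eq_bigr do rewrite !big_split.
rewrite !big_split /= -big_distrlr /= sum2_affine_mul_l sum2_affine_mul_r sum_ind.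
by rewrite -mulnn PoszM; ring.
Qed.

Lemma sum2_ind_e3 :
  \sum_(x : F) \sum_(y : F) ind x * ind y * ind (a * x + b * y) = (N3 B a b 1%R)%:Z.
Proof.
rewrite N3_1E [RHS]big_mkcond; apply: eq_bigr => x _; rewrite /ind.
case: (x \in B) => /=; last by rewrite big1 // => y _; rewrite !mul0r.
rewrite [RHS]big_mkcond; apply: eq_bigr => y _.
by case: (y \in B); rewrite /= ?mul1r ?mul0r // (oppr_pchar2 F_pchar2).
Qed.

Lemma sum2_sign_charf :
  \sum_(x : F) \sum_(y : F)
      (-1) ^+ (charf B x + charf B y + charf B (a * x + b * y) : nat)
    = (#|F| ^ 2)%:Z - 6 * (#|F| * #|B|)%:Z + 12 * (#|B| ^ 2)%:Z
      - 8 * (N3 B a b 1%R)%:Z :> int.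
Proof.
have sign x y : (-1) ^+ (charf B x + charf B y + charf B (a * x + b * y) : nat) =
    1 - 2 * (ind x + ind y + ind (a * x + b * y))
    + 4 * (ind x * ind y + ind x * ind (a * x + b * y) + ind y * ind (a * x + b * y))
    - 8 * (ind x * ind y * ind (a * x + b * y)) :> int.
  by rewrite /charf /ind; case: (x \in B); case: (y \in B); case: (_ \in B).
under eq_bigr do under eq_bigr do rewrite sign.
under eq_bigr do rewrite sumrB big_split sumrB -!mulr_sumr.
rewrite sumrB big_split sumrB -!mulr_sumr sum2_ind_e1 sum2_ind_e2 sum2_ind_e3.
by rewrite /= !sumr_const -mulrnA mulnn natz !cardE; ring.
Qed.

End CubeExpansion.

Theorem lemma5 (F : finFieldType) (n : nat) (hq : #|F| = (2 ^ n)%N)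
  (k : nat) (B E : {set F}) (hk : #|B| = k) (d : int)
  (hd : coprimez d (#|F|%:Z - 1))
  (hW : forall mu : F, walsh n (charf B) mu = walsh n (charf E) (mu ^ d))
  (a b : F) (ha : a != 0) (hb : b != 0) :
  \sum_(x : F) \sum_(y : F)
      (-1) ^+ (charf B x + charf B y + charf B (a * x + b * y) : nat)
    = (#|F| ^ 2)%:Z - 6 * (#|F| * k)%:Z + 12 * (k ^ 2)%:Z
      - 8 * (N3 E (a ^ d) (b ^ d) 1%R)%:Z :> int
  /\ N3 B a b 1%R = N3 E (a ^ d) (b ^ d) 1%R.
Proof.
have N3_BE := N3_expz hq hW a b hd.
split=> //; rewrite -N3_BE -hk.
exact: sum2_sign_charf (card_finPcharP hq isT) ha hb.
Qed.
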